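(* Let $n\geq 2$ and let $X=[1+ij]_{i,j=1}^n$. Then $X=ZDZ^T$, where \[ Z=\Big[L_n\Big(\tfrac{n+1}{n}\Big)L_{n-1}\Big(\tfrac{n}{n-1}\Big)\cdots L_2\Big(\tfrac{3}{2}\Big)\Big]\Big[L_n\Big(\tfrac{n-1}{n}\Big)L_{n-1}\Big(\tfrac{n-2}{n-1}\Big)\cdots L_3\Big(\tfrac{2}{3}\Big)\Big] \] and $D$ is the $n\times n$ diagonal matrix with $D_{11}=2$, $D_{22}=\tfrac12$, and $D_{kk}=0$ for $3\leq k\leq n$.
   Context: For a real number $s$ and $2\leq i\leq n$, $L_i(s)$ denotes the $n\times n$ matrix with all diagonal entries equal to $1$, $(i,i-1)$ entry equal to $s$, and all other entries zero. An empty product (when $n=2$) is the identity matrix. *)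

(* Matrices are 0-indexed ('I_n); the paper's 1-based
   index i corresponds to the ordinal with value i-1. *)
From HB Require Import structures.
From mathcomp Require Import all_boot all_order all_algebra.
Set Implicit Arguments. Unset Strict Implicit. Unset Printing Implicit Defensive.
Import Order.TTheory GRing.Theory Num.Theory.
Local Open Scope ring_scope.

(* L_i(s) with 1-based i (2 <= i <= n): identity plus s at 1-based entry (i, i-1),
   i.e. 0-based entry (i-1, i-2). *)
Definition Lmat (R : nzRingType) (n : nat) (i : nat) (s : R) : 'M[R]_n :=
  \matrix_(a < n, b < n)
    ((a == b)%:R + (if ((a.+1 == i) && (b.+2 == i))%N then s else 0)).

Definition mxprod (R : nzRingType) (n : nat) (s : seq 'M[R]_n) : 'M[R]_n :=
  foldr (fun A B => A *m B) 1%:M s.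

Definition Xmat (R : nzRingType) (n : nat) : 'M[R]_n :=
  \matrix_(i < n, j < n) (1 + (i.+1 * j.+1)%:R).

(* L_n((n+1)/n) L_{n-1}(n/(n-1)) ... L_2(3/2) *)
Definition Z1 (R : fieldType) (n : nat) : 'M[R]_n :=
  mxprod [seq Lmat n k (k.+1%:R / k%:R) | k <- rev (iota 2 (n - 1))].

(* L_n((n-1)/n) L_{n-1}((n-2)/(n-1)) ... L_3(2/3) *)
Definition Z2 (R : fieldType) (n : nat) : 'M[R]_n :=
  mxprod [seq Lmat n k (k.-1%:R / k%:R) | k <- rev (iota 3 (n - 2))].

Definition Zmat (R : fieldType) (n : nat) : 'M[R]_n := Z1 R n *m Z2 R n.

Definition Dmat (R : fieldType) (n : nat) : 'M[R]_n :=
  \matrix_(i < n, j < n)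
    (if i == j then (if (i == 0 :> nat) then 2 else if (i == 1 :> nat) then 2^-1 else 0)
     else 0).

(** The two factors of [Z] are products of elementary matrices [L_k(s)],
    and [L_k(s)] only adds [s] times entry [k-1] to entry [k] of a vector.
    Hence the products act on a column as a single top-to-bottom sweep,
    whose outcome on the two columns of the identity that [D] does not
    annihilate has a closed form: the first two columns of [Z] are
    [((i+1)/2)_i] and [(i-1)_i] (1-based).  Since [D = diag(2, 1/2, 0, ...)],
    [Z D Z^T = 2 u u^T + (1/2) w w^T] for these two columns [u], [w], and
    [(i+1)(j+1)/2 + (i-1)(j-1)/2 = 1 + i j]. *)
From mathcomp Require Import all_boot all_order all_algebra.
From mathcomp Require Import ring.
Import GRing.Theory Num.Theory.
Local Open Scope ring_scope.

Lemma delta_mx_colE (R : nzRingType) n (c : 'I_n) :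
  delta_mx c 0 = \col_(j < n) (j == c :> nat)%:R :> 'cV[R]_n.
Proof. by apply/matrixP => i k; rewrite !mxE ord1 eqxx andbT val_eqE. Qed.

Lemma Lmat_mulmx (R : nzRingType) n k (s : R) (v : 'cV[R]_n) (f : nat -> R) :
  (2 <= k)%N -> (forall j : 'I_n, v j 0 = f j) ->
  Lmat n k s *m v = \col_(j < n) (if j.+1 == k then f j + s * f j.-1 else f j).
Proof.
move=> k_ge2 vE; apply/matrixP => i z; rewrite ord1 !mxE.
under eq_bigr => b _ do rewrite !mxE mulrDl.
rewrite big_split /= (bigD1 i) //= eqxx mul1r big1 ?addr0; last first.
  by move=> b /negPf neq_bi; rewrite eq_sym neq_bi mul0r.
rewrite vE; case: eqP => [ik|_]; last by rewrite big1 ?addr0 // => b _; rewrite mul0r.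
congr (_ + _).
have i_gt0 : (0 < i)%N by rewrite -ltnS ik.
have ilt : (i.-1 < n)%N by rewrite (leq_ltn_trans (leq_pred i)).
rewrite (bigD1 (Ordinal ilt)) //= -ik prednK // eqxx vE big1 ?addr0 //.
move=> b neq_b; case: ifP => [/eqP [bE]|_]; last by rewrite mul0r.
by case/eqP: neq_b; apply: val_inj; rewrite /= -bE.
Qed.

(** [F m] is the column after the first [m] factors [L_a, ..., L_(a+m-1)]
    have acted. *)
Lemma mxprod_Lmat_sweep (R : nzRingType) n (g : nat -> R) a
    (F : nat -> nat -> R) (v : 'cV[R]_n) :
  (2 <= a)%N -> (forall j : 'I_n, v j 0 = F 0%N j) ->
  (forall m j, F m.+1 j =
     (if j.+1 == (a + m)%N then F m j + g (a + m)%N * F m j.-1 else F m j)) ->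
  forall m, mxprod [seq Lmat n k (g k) | k <- rev (iota a m)] *m v
            = \col_(j < n) F m j.
Proof.
move=> a_ge2 vE FS; elim=> [|m IHm].
  by rewrite mul1mx; apply/matrixP => i z; rewrite ord1 mxE vE.
have -> : iota a m.+1 = rcons (iota a m) (a + m)%N by rewrite -cats1 -addn1 iotaD.
rewrite rev_rcons /= -mulmxA IHm.
rewrite (@Lmat_mulmx _ _ _ _ _ (F m)) ?(leq_trans a_ge2 (leq_addr _ _)) //;
  last by move=> j; rewrite mxE.
by apply/matrixP => i z; rewrite !mxE FS.
Qed.

Section FirstColumnsOfZ.
Variables (R : numFieldType) (n : nat).

Lemma col0_Z2 : col 0 (Z2 R n.+2) = delta_mx 0 0.
Proof.
rewrite colE /Z2 subn2 /= (@mxprod_Lmat_sweep _ _ _ _ (fun _ j => (j == 0%N)%:R)) //.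
- by rewrite delta_mx_colE.
- by move=> j; rewrite delta_mx_colE mxE.
- by move=> m [|[|j]] //=; case: eqP => // _; rewrite mulr0 addr0.
Qed.

Lemma col1_Z2 :
  col 1 (Z2 R n.+2) = \col_(j < n.+2) (if j == 0%N :> nat then 0 else 2 / j.+1%:R).
Proof.
pose F m j : R := if j == 0%N then 0 else if (j <= m.+1)%N then 2 / j.+1%:R else 0.
rewrite colE /Z2 subn2 /= (@mxprod_Lmat_sweep _ _ _ _ F) //.
- by apply/matrixP => i z; rewrite !mxE /F -ltnS ltn_ord.
- by move=> [[|[|j]] ?]; rewrite delta_mx_colE mxE /F //= divff ?pnatr_eq0.
move=> m [|j]; rewrite /F //= add3n !eqSS !ltnS.
case: eqP => [->|/eqP neq_j]; last by rewrite leq_eqVlt (negPf neq_j).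
by rewrite ltnn !leqnn /= add0r; field; rewrite -!natrD !pnatr_eq0.
Qed.

Lemma col0_Zmat : col 0 (Zmat R n.+2) = \col_(i < n.+2) (i.+2%:R / 2).
Proof.
pose F m j : R := if (j <= m)%N then j.+2%:R / 2 else 0.
rewrite /Zmat !colE -mulmxA -colE col0_Z2 /Z1 subSS subn0.
rewrite (@mxprod_Lmat_sweep _ _ _ _ F) //.
- by apply/matrixP => i z; rewrite !mxE /F -ltnS ltn_ord.
- by move=> [[|j] ?]; rewrite delta_mx_colE mxE /F //= divff ?pnatr_eq0.
move=> m j; rewrite /F add2n eqSS.
case: eqP => [->|/eqP neq_j]; last by rewrite leq_eqVlt (negPf neq_j).
by rewrite ltnn !leqnn /= add0r; field; rewrite -!natrD !pnatr_eq0.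
Qed.

Lemma col1_Zmat : col 1 (Zmat R n.+2) = \col_(i < n.+2) i%:R.
Proof.
pose F m j : R := if (j <= m)%N then j%:R else 2 / j.+1%:R.
rewrite /Zmat !colE -mulmxA -colE col1_Z2 /Z1 subSS subn0.
rewrite (@mxprod_Lmat_sweep _ _ _ _ F) //.
- by apply/matrixP => i z; rewrite !mxE /F -ltnS ltn_ord.
- by move=> [[|j] ?]; rewrite mxE /F.
move=> m j; rewrite /F add2n eqSS.
case: eqP => [->|/eqP neq_j]; last by rewrite leq_eqVlt (negPf neq_j).
by rewrite ltnn !leqnn /=; field; rewrite -!natrD !pnatr_eq0.
Qed.

End FirstColumnsOfZ.

Lemma mulmx_Dmat_trmx (R : fieldType) n (Z : 'M[R]_n.+2) :
  Z *m Dmat R n.+2 *m Z^T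
  = 2 *: (col 0 Z *m (col 0 Z)^T) + 2^-1 *: (col 1 Z *m (col 1 Z)^T).
Proof.
have -> : Dmat R n.+2 = diag_mx (\row_k Dmat R n.+2 k k).
  apply/matrixP => i j; rewrite !mxE.
  by rewrite eqxx; case: eqP; rewrite ?mulr0n.
apply/matrixP => i j; rewrite mul_mx_diag !mxE !big_ord1 !mxE 2!big_ord_recl.
rewrite big1 => [|k _]; last by rewrite !mxE /= if_same mulr0 mul0r.
rewrite !mxE /=.
have -> : lift ord0 ord0 = 1 :> 'I_n.+2 by apply: val_inj; rewrite /= modn_small.
by rewrite addr0 mulrAC mulrC; congr (_ + _); rewrite mulrAC mulrC.
Qed.

Theorem corollary2p3 (R : realFieldType) (n : nat) (hn : (2 <= n)%N) :
  Xmat R n = Zmat R n *m Dmat R n *m (Zmat R n)^T.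
Proof.
case: n hn => [|[|n]] // _.
rewrite mulmx_Dmat_trmx col0_Zmat col1_Zmat.
apply/matrixP => i j; rewrite !mxE !big_ord1 !mxE natrM.
by rewrite !mulrS !mulr0n; field.
Qed.
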